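(* Let $k\ge2$ and $G=\mathrm{BS}(1,k)=\langle a,t\mid tat^{-1}=a^k\rangle$. For every finite subset $A\subseteq G$ there exists $g\in G$ such that $c(gA)=|A|$, i.e. the elements of $gA$ lie in pairwise distinct conjugacy classes.
   Context: For $B\subseteq G$, $c(B)$ is the number of distinct conjugacy classes of $G$ meeting $B$. *)

From HB Require Import structures.
From mathcomp Require Import all_boot all_order all_algebra.
Set Implicit Arguments. Unset Strict Implicit. Unset Printing Implicit Defensive.
Import Order.TTheory GRing.Theory Num.Theory.
Local Open Scope ring_scope.

(* Model of BS(1,k) = < a, t | t a t^-1 = a^k > as the group of affine maps
   x |-> k^n x + b of Q with n : int and b in Z[1/k].
   An element (n, b) : int * rat stands for the map x |-> k^n * x + b.
   Generators: a = (0, 1) (x |-> x+1), t = (1, 0) (x |-> k x);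
   indeed t a t^-1 = (0, k) = a^k. *)

Definition BSel := (int * rat)%type.

Definition inBS (k : nat) (g : BSel) : Prop :=
  exists m : nat, g.2 * (k%:Q) ^+ m \is a Num.int.

(* group law = composition of affine maps: (g * h)(x) = g (h x) *)
Definition BSmul (k : nat) (g h : BSel) : BSel :=
  (g.1 + h.1, g.2 + (k%:Q) ^ g.1 * h.2).

Definition BSinv (k : nat) (g : BSel) : BSel :=
  (- g.1, - ((k%:Q) ^ (- g.1) * g.2)).

Definition BSa : BSel := (0%R, 1).
Definition BSt : BSel := (1%R, 0).

Definition BSconj (k : nat) (g h : BSel) : Prop :=
  exists u : BSel, inBS k u /\ BSmul k (BSmul k u g) (BSinv k u) = h.

(* Let k^E clear the denominators of all second coordinates in A and translate
   A by g = (-P, (k^s + O) / k^(P+E)).  Then g x = (-L, (k^s + B x) / k^(P+E))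
   with L = P - x.1 and naturals B x < k^t, distinct for distinct x with the
   same first coordinate.  Conjugating (n, u) by (m, c) gives
   (n, k^m u + c (1 - k^n)), so for n = -L conjugacy becomes v = k^m u modulo
   (k^L - 1) Z[1/k], i.e., k being invertible modulo k^L - 1, a congruence of
   naturals modulo k^L - 1, under which multiplication by k rotates the L
   base-k digits.  When s > L/2 + t + 1, the digit string of k^s + B (a single
   1 high above the short block B) is no nontrivial rotation of another such
   string, and the trivial rotation recovers B. *)

From mathcomp Require Import all_boot all_order all_algebra.
From mathcomp Require Import zify ring.
Set Implicit Arguments. Unset Strict Implicit. Unset Printing Implicit Defensive.
Import Order.TTheory GRing.Theory Num.Theory.

Lemma expn_mod_pred_period (k L m : nat) :
  (0 < k)%N -> (k ^ m = k ^ (m %% L) %[mod k ^ L - 1])%N.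
Proof.
move=> k_gt0; have kL_gt0 : (0 < k ^ L)%N by rewrite expn_gt0 k_gt0.
have kL_mod : (k ^ L = 1 %[mod k ^ L - 1])%N by rewrite -{1}(subnK kL_gt0) modnDl.
rewrite {1}(divn_eq m L) expnD (mulnC _ L) expnM -modnMml -modnXm kL_mod.
by rewrite modnXm exp1n modnMml mul1n.
Qed.

Section Rotation.

Variables k L s t : nat.
Hypothesis k_ge2 : (2 <= k)%N.
Hypothesis s_lt_L : (s < L)%N.
Hypothesis s_large : (L + 2 * t + 2 < 2 * s)%N.

Let leq_kX a b : (a <= b)%N -> (k ^ a <= k ^ b)%N.
Proof. by move=> /leq_pexp2l; apply; lia. Qed.

Let kX_double a : (2 * k ^ a <= k ^ a.+1)%N.
Proof. by rewrite expnS leq_mul2r k_ge2 orbT. Qed.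

Let kX_gt0 a : (0 < k ^ a)%N.
Proof. by rewrite expn_gt0; lia. Qed.

Let head_lt_mod B : (B < k ^ t)%N -> (k ^ s + B < k ^ L - 1)%N.
Proof.
move=> ltB; have := kX_double t; have := kX_double s.
have : (k ^ t.+1 <= k ^ s)%N by apply: leq_kX; lia.
have : (k ^ s.+1 <= k ^ L)%N by apply: leq_kX; lia.
lia.
Qed.

Lemma rotation_half_neq m B1 B2 :
  (0 < m)%N -> (2 * m <= L)%N -> (B1 < k ^ t)%N -> (B2 < k ^ t)%N ->
  ~ (k ^ s + B2 = k ^ m * (k ^ s + B1) %[mod k ^ L - 1])%N.
Proof.
move=> m_gt0 m_half ltB1 ltB2.
have tail_small : (k ^ m * B1 < k ^ (m + t))%N by rewrite expnD ltn_pmul2l.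
rewrite (modn_small (head_lt_mod ltB2)) mulnDr -expnD (addnC m s).
have [sm_lt_L | L_le_sm] := ltnP (s + m) L.
- have : (k ^ (s + m).+1 <= k ^ L)%N by apply: leq_kX; lia.
  have : (k ^ (m + t).+2 <= k ^ L)%N by apply: leq_kX; lia.
  have : (k ^ s.+1 <= k ^ (s + m))%N by apply: leq_kX; lia.
  have : (k ^ t <= k ^ s)%N by apply: leq_kX; lia.
  have := kX_double (s + m); have := kX_double (m + t); have := kX_double (m + t).+1.
  have := kX_double s; have := kX_gt0 (m + t).
  by move=> *; rewrite modn_small; lia.
- have wrap : (k ^ (s + m) = k ^ (s + m - L) * (k ^ L - 1) + k ^ (s + m - L))%N.
    rewrite mulnBr muln1 -expnD subnK ?subnK //.
    by apply: leq_kX; lia.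
  rewrite wrap -addnA modnMDl.
  have : (k ^ (s + m - L).+1 <= k ^ s)%N by apply: leq_kX; lia.
  have : (k ^ (m + t).+1 <= k ^ s)%N by apply: leq_kX; lia.
  have := kX_double (s + m - L); have := kX_double (m + t); have := head_lt_mod ltB2.
  by move=> *; rewrite modn_small; lia.
Qed.

Lemma rotation_neq m B1 B2 :
  B1 != B2 -> (B1 < k ^ t)%N -> (B2 < k ^ t)%N ->
  ~ (k ^ s + B2 = k ^ m * (k ^ s + B1) %[mod k ^ L - 1])%N.
Proof.
move=> neqB ltB1 ltB2; have k_gt0 : (0 < k)%N by lia.
rewrite -modnMml (expn_mod_pred_period L m k_gt0) modnMml.
have r_lt_L : (m %% L < L)%N by rewrite ltn_mod; lia.
have [-> | r_gt0] := posnP (m %% L).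
  rewrite mul1n !modn_small ?head_lt_mod // => /eqP.
  by rewrite eqn_add2l eq_sym (negbTE neqB).
have [r_half | r_large] := leqP (2 * (m %% L)) L; first exact: rotation_half_neq.
move=> rot; apply: (@rotation_half_neq (L - m %% L) B2 B1 _ _ ltB2 ltB1).
- by rewrite subn_gt0.
- lia.
have kL_mod : (k ^ L = 1 %[mod k ^ L - 1])%N.
  by rewrite (expn_mod_pred_period L L k_gt0) modnn.
rewrite -modnMmr rot modnMmr mulnA -expnD subnK; last exact: ltnW.
by rewrite -modnMml kL_mod modnMml mul1n.
Qed.

End Rotation.

Local Open Scope ring_scope.

(* q lies in Z[1/k]; inBS k g is convertibly kadic k g.2. *)
Definition kadic (k : nat) (q : rat) : Prop :=
  exists m : nat, q * k%:Q ^+ m \is a Num.int.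

Section AffineModel.

Variable k : nat.
Hypothesis k_gt0 : (0 < k)%N.

Let k_neq0 : k%:Q != 0. Proof. by rewrite pnatr_eq0 -lt0n. Qed.

Lemma kadicM a b : kadic k a -> kadic k b -> kadic k (a * b).
Proof.
move=> [m am] [n bn]; exists (m + n)%N.
by rewrite exprD mulrACA rpredM.
Qed.

Lemma kadicN a : kadic k a -> kadic k (- a).
Proof. by move=> [m am]; exists m; rewrite mulNr rpredN. Qed.

Lemma kadic_expz (z : int) : kadic k (k%:Q ^ z).
Proof.
case: z => n; first by exists 0%N; rewrite mulr1 rpredX // natr_int.
exists n.+1; by rewrite NegzE -exprnN mulVf ?expf_neq0.
Qed.

Lemma kadic_common_exp (T : eqType) (s : seq T) (q : T -> rat) :
  (forall x, x \in s -> kadic k (q x)) ->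
  exists E : nat, forall x, x \in s -> q x * k%:Q ^+ E \is a Num.int.
Proof.
elim: s => [|a s IHs] kadic_s; first by exists 0%N.
have [e ae] := kadic_s a (mem_head a s).
have [E sE] : exists E : nat, forall x, x \in s -> q x * k%:Q ^+ E \is a Num.int.
  by apply: IHs => x xs; apply: kadic_s; rewrite inE xs orbT.
have kX_int n : k%:Q ^+ n \is a Num.int by rewrite rpredX // natr_int.
exists (e + E)%N => x; rewrite inE => /predU1P [-> | xs].
  by rewrite exprD mulrA rpredM.
by rewrite exprD mulrA mulrAC rpredM ?sE.
Qed.

Lemma kadic_offset (T : eqType) (s : seq T) (q : T -> rat) :
  (forall x, x \in s -> kadic k (q x)) ->
  exists (E O : nat) (f : T -> nat),
    forall x, x \in s -> (f x)%:Q = O%:Q + q x * k%:Q ^+ E.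
Proof.
move=> /kadic_common_exp [E intE].
pose n x := numq (q x * k%:Q ^+ E).
pose O := (\max_(x <- s) `|n x|)%N.
exists E, O, (fun x => absz (O%:Z + n x)) => x xs.
have le_O : (`|n x| <= O)%N.
  by apply: (leq_bigmax_seq (F := fun x => `|n x|%N)).
have -> : absz (O%:Z + n x) = O%:Z + n x :> int by clear -le_O; lia.
by rewrite intrD /n numqK ?intE.
Qed.

Lemma kadic_modn (d a b : nat) (c : rat) :
  coprime d k -> kadic k c -> b%:Q - a%:Q = c * d%:Q -> (b = a %[mod d])%N.
Proof.
move=> coprime_dk [F /intrP [z cF]] eq_ba.
have eqZ : ((k ^ F)%N%:Z * (b%:Z - a%:Z) = z * d%:Z)%R.
  apply: (@intr_inj rat); rewrite !rmorphM rmorphB /= -cF -!pmulrn.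
  by rewrite mulrAC -eq_ba natrX; ring.
have : (d%:Z %| b%:Z - a%:Z)%Z.
  rewrite -(@Gauss_dvdzr _ (k ^ F)%N%:Z); last by rewrite coprimezE /= coprimeXr.
  by rewrite eqZ dvdz_mull.
by rewrite -eqz_mod_dvd !modz_nat => /eqP [].
Qed.

Lemma coprime_pred_expn (L : nat) : (0 < L)%N -> coprime (k ^ L - 1) k.
Proof.
move=> L_gt0; have kL_gt0 : (0 < k ^ L)%N by rewrite expn_gt0 k_gt0.
by apply: coprime_dvdr (dvdn_exp L_gt0 (dvdnn k)) _; rewrite subn1 coprimePn.
Qed.

Lemma kadic_rotation (L a b : nat) (m : int) (c : rat) :
  (0 < L)%N -> kadic k c -> b%:Q = k%:Q ^ m * a%:Q + c * (k ^ L - 1)%N%:Q ->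
  exists j : nat, (b = k ^ j * a %[mod k ^ L - 1])%N \/
                  (a = k ^ j * b %[mod k ^ L - 1])%N.
Proof.
move=> L_gt0 kadic_c; have coprime_Mk := coprime_pred_expn L_gt0.
case: m => j; rewrite -!pmulrn => eq_b.
  exists j; left; apply: kadic_modn coprime_Mk kadic_c _.
  by rewrite -!pmulrn natrM natrX eq_b addrC addKr.
exists j.+1; right.
apply: kadic_modn coprime_Mk (kadicN (kadicM kadic_c (kadic_expz j.+1))) _.
rewrite -!pmulrn natrM natrX eq_b NegzE -exprnN.
rewrite -exprnP; field; exact: expf_neq0.
Qed.

Lemma BSconjE (g h : BSel) : BSconj k g h ->
  h.1 = g.1 /\ exists (m : int) (c : rat),
    kadic k c /\ h.2 = k%:Q ^ m * g.2 + c * (1 - k%:Q ^ g.1).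
Proof.
move=> [[m c] [kadic_c <-]].
rewrite /BSmul /BSinv /=; split; first by rewrite addrAC subrr add0r.
exists m, c; split=> //.
rewrite expfzDr // -invr_expz; field; exact: expfz_neq0.
Qed.

Lemma BSconj_rotation (L a b : nat) (e : int) : (0 < L)%N ->
  BSconj k (- L%:Z, a%:Q * k%:Q ^ e) (- L%:Z, b%:Q * k%:Q ^ e) ->
  exists j : nat, (b = k ^ j * a %[mod k ^ L - 1])%N \/
                  (a = k ^ j * b %[mod k ^ L - 1])%N.
Proof.
move=> L_gt0 /BSconjE [_ [m [c [kadic_c /= eq_b]]]].
apply: (kadic_rotation (m := m) L_gt0 (kadicM kadic_c (kadic_expz (- e - L%:Z)))).
apply: (mulIf (expfz_neq0 e k_neq0)); rewrite eq_b.
rewrite expfzDr // -!invr_expz -exprnP -!pmulrn natrB ?expn_gt0 ?k_gt0 // natrX.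
field; rewrite expfz_neq0 ?expf_neq0 //.
Qed.

Lemma BSmul_offset (P E D O B : nat) (v : BSel) :
  B%:Q = O%:Q + v.2 * k%:Q ^+ E ->
  BSmul k (- P%:Z, (D + O)%N%:Q * k%:Q ^ (- (P + E)%N%:Z)) v
    = (v.1 - P%:Z, (D + B)%N%:Q * k%:Q ^ (- (P + E)%N%:Z)).
Proof.
move=> eq_B.
rewrite /BSmul /=; congr pair; first by rewrite addrC.
rewrite !PoszD !intrD eq_B -!exprnN exprD.
by field; rewrite !expf_neq0.
Qed.

End AffineModel.

Lemma BSconj_offset_neq (k L s t B1 B2 : nat) (e : int) :
  (2 <= k)%N -> (0 < L)%N -> (s < L)%N -> (L + 2 * t + 2 < 2 * s)%N ->
  B1 != B2 -> (B1 < k ^ t)%N -> (B2 < k ^ t)%N ->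
  ~ BSconj k (- L%:Z, (k ^ s + B1)%N%:Q * k%:Q ^ e)
             (- L%:Z, (k ^ s + B2)%N%:Q * k%:Q ^ e).
Proof.
move=> k_ge2 L_gt0 s_lt_L s_large neqB ltB1 ltB2.
have k_gt0 : (0 < k)%N by apply: ltnW.
case/(BSconj_rotation k_gt0 L_gt0) => j [rot | rot].
  exact: (rotation_neq (m := j) k_ge2 s_lt_L s_large neqB ltB1 ltB2 rot).
rewrite eq_sym in neqB.
exact: (rotation_neq (m := j) k_ge2 s_lt_L s_large neqB ltB2 ltB1 rot).
Qed.

Theorem corollary5p4 (k : nat) (hk : (2 <= k)%N) (A : seq BSel)
    (hA : uniq A) (hAG : forall x, x \in A -> inBS k x) :
  exists g : BSel, inBS k g /\
    (forall x y, x \in A -> y \in A -> x != y ->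
       ~ BSconj k (BSmul k g x) (BSmul k g y)).
Proof.
have k_gt0 : (0 < k)%N by apply: ltnW.
have k_neq0 : k%:Q != 0 by rewrite pnatr_eq0 -lt0n.
have [E [O [B eq_B]]] := kadic_offset hAG.
pose t := (\max_(x <- A) B x).+1.
have ltB x : x \in A -> (B x < k ^ t)%N.
  move=> xA; apply: ltn_trans (ltn_expl t hk).
  by rewrite ltnS (leq_bigmax_seq (F := B)).
pose N := (\max_(x <- A) `|x.1|)%N.
pose P := (3 * N + 2 * t + 5)%N; pose s := (P - N - 1)%N.
exists (- P%:Z, (k ^ s + O)%N%:Q * k%:Q ^ (- (P + E)%N%:Z)); split.
  exists (P + E)%N; rewrite -mulrA -exprnN mulVf ?expf_neq0 // mulr1.
  by rewrite natr_int.
move=> x y xA yA neq_xy.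
rewrite (BSmul_offset k_gt0 _ _ (eq_B x xA)) (BSmul_offset k_gt0 _ _ (eq_B y yA)).
move=> conj.
have [/addIr y1_x1 _] := BSconjE k_gt0 conj.
have [L [eq_L L_gt0 s_lt_L s_large]] : exists L : nat,
    [/\ x.1 - P%:Z = - L%:Z, (0 < L)%N, (s < L)%N & (L + 2 * t + 2 < 2 * s)%N].
  exists `|P%:Z - x.1|%N.
  have : (`|x.1| <= N)%N by exact: leq_bigmax_seq.
  by split; lia.
rewrite y1_x1 eq_L in conj.
apply: (BSconj_offset_neq hk L_gt0 s_lt_L s_large _ (ltB x xA) (ltB y yA) conj).
apply: contra neq_xy => /eqP eqB.
have x2_y2 : x.2 = y.2.
  apply: (mulIf (expf_neq0 E k_neq0)); apply: (addrI O%:Q).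
  by rewrite -!eq_B // eqB.
by rewrite [x]surjective_pairing [y]surjective_pairing y1_x1 x2_y2.
Qed.
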